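(* Let $R$ be a finite Blaschke product and $m\ge1$. Then there exists an isomorphism of Hilbert bimodules over $A=C(\mathbb{T})$, $\Psi:X_R^{\otimes m}\to X_{R^{\circ m}}$, such that $\Psi(\xi_1\otimes\cdots\otimes\xi_m)=\xi_1\,(\xi_2\circ R)\,(\xi_3\circ R^{\circ2})\cdots(\xi_m\circ R^{\circ(m-1)})$ for $\xi_1,\dots,\xi_m\in X_R$.
   Context: A finite Blaschke product is $R(z)=\lambda\prod_{k=1}^n\frac{z-z_k}{1-\overline{z_k}z}$ with $\lambda\in\mathbb{T}$ and $z_k$ in the open unit disk; its iterates are again finite Blaschke products. For a finite Blaschke product $Q$, $X_Q=C(\mathbb{T})$ is the Hilbert bimodule over $A=C(\mathbb{T})$ with $(a\cdot\xi\cdot b)(z)=a(z)\xi(z)b(Q(z))$ and $\langle\xi,\eta\rangle_A(w)=\sum_{z\in Q^{-1}(w)}\frac{1}{|Q'(z)|}\overline{\xi(z)}\eta(z)$. $X_R^{\otimes m}$ denotes the $m$-fold interior tensor product of $X_R$ over $A$ (balanced over the right/left actions). *)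

From HB Require Import structures.
From mathcomp Require Import all_boot all_order all_algebra.
From mathcomp Require Import complex reals.
From Stdlib Require Import ClassicalEpsilon.
Set Implicit Arguments. Unset Strict Implicit. Unset Printing Implicit Defensive.
Import Order.TTheory GRing.Theory Num.Theory.
Local Open Scope ring_scope.

Section Defs.
Variable R : realType.
Local Notation C := R[i].

Definition onT (z : C) : Prop := `|z| = 1.

(* equality of functions on T (elements of C(T) are functions C -> C
   considered on T) *)
Definition eqT (f g : C -> C) : Prop := forall z, onT z -> f z = g z.

Definition contT (f : C -> C) : Prop :=
  forall z, onT z -> forall eps : C, 0 < eps ->
    exists2 delta : C, 0 < delta &
      forall w, onT w -> `|w - z| < delta -> `|f w - f z| < eps.

Definition blaschke (lam : C) (zs : seq C) : C -> C :=
  fun z => lam * \prod_(a <- zs) ((z - a) / (1 - a^* * z)).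

Definition is_blaschke (Q : C -> C) : Prop :=
  exists lam zs, `|lam| = 1 /\ (forall a, a \in zs -> `|a| < 1) /\
                 Q = blaschke lam zs.

Definition is_cderiv (f : C -> C) (z d : C) : Prop :=
  forall eps : C, 0 < eps -> exists2 delta : C, 0 < delta &
    forall h : C, 0 < `|h| < delta -> `|(f (z + h) - f z) / h - d| < eps.

Definition cderiv (f : C -> C) (z : C) : C :=
  epsilon (inhabits 0) (fun d => is_cderiv f z d).

Definition preimT (Q : C -> C) (w : C) : seq C :=
  epsilon (inhabits [::])
    (fun s : seq C => uniq s /\ forall z, z \in s <-> (onT z /\ Q z = w)).

Definition ipX (Q : C -> C) (xi eta : C -> C) : C -> C :=
  fun w => \sum_(z <- preimT Q w) (`|cderiv Q z|)^-1 * (xi z)^* * eta z.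

Definition iterc (k : nat) (Q : C -> C) : C -> C := fun z => iter k Q z.

(* elementary tensors xi_0 (x) ... (x) xi_{m-1} of X_R^{(x) m}, and
   formal finite sums of them (the algebraic tensor product) *)
Definition elem_tensor (m : nat) := 'I_m -> C -> C.
Definition formal_sum (m : nat) := seq (elem_tensor m).

Fixpoint valid_sum (m : nat) (s : formal_sum m) : Prop :=
  match s with
  | [::] => True
  | e :: s' => (forall i, contT (e i)) /\ valid_sum s'
  end.

(* interior tensor product inner product on elementary tensors:
   c_0 = 1, c_{k+1} = < e_k , c_k . f_k >_R, result c_m *)
Definition ip_elem (Q : C -> C) (m : nat) (e f : elem_tensor m) : C -> C :=
  foldl (fun c i => ipX Q (e i) (fun z => c z * f i z)) (fun _ => 1) (enum 'I_m).

Definition ip_tensor (Q : C -> C) (m : nat) (s t : formal_sum m) : C -> C :=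
  fun w => \sum_(e <- s) \sum_(f <- t) ip_elem Q e f w.

(* bimodule actions on X_R^{(x) m}: left on the first factor,
   right (a . xi . b)(z) = a(z) xi(z) b(R z) on the last factor *)
Definition lact_elem (m : nat) (a : C -> C) (e : elem_tensor m) : elem_tensor m :=
  fun i z => if val i == 0%N then a z * e i z else e i z.
Definition ract_elem (Q : C -> C) (m : nat) (b : C -> C) (e : elem_tensor m)
  : elem_tensor m :=
  fun i z => if val i == m.-1 then e i z * b (Q z) else e i z.

Definition psi_formula (Q : C -> C) (m : nat) (e : elem_tensor m) : C -> C :=
  fun z => \prod_(i < m) e i (iterc i Q z).

End Defs.

From HB Require Import structures.
From mathcomp Require Import all_boot all_order all_algebra.
From mathcomp Require Import complex reals.
From mathcomp Require Import boolp functions topology normedtype derive.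
From mathcomp Require Import ring.
From Stdlib Require Import ClassicalEpsilon.
Set Implicit Arguments. Unset Strict Implicit. Unset Printing Implicit Defensive.
Import Order.TTheory GRing.Theory Num.Theory.
Import numFieldNormedType.Exports.
Local Open Scope ring_scope.
Local Open Scope classical_set_scope.

(* Psi sends a formal sum of elementary tensors to the sum of the products
   xi_1 (xi_2 o R) ... (xi_m o R^(m-1)); additivity and the bimodule identities
   are then read off this formula, and since Psi (eta (x) 1 (x) ... (x) 1) = eta
   its range is everything.  The real content is the inner product.  The
   interior tensor product computes it by the recursion
   c_{k+1} = <xi_k, c_k eta_k>_R, and this telescopes into <Psi xi, Psi eta> for
   R^(k+1) because the fibre of R^(k+1) over w is the disjoint union of the
   fibres of R^k over the points of R^-1(w), while the chain rule gives
   (R^(k+1))'(z) = R'(R^k z) (R^k)'(z).  That only uses that R maps T into T,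
   is differentiable there and has finite fibres on T; for a nonconstant
   Blaschke product the fibre over w consists of roots of the nonzero
   polynomial lam prod (z - a) - w prod (1 - conj(a) z). *)

Section UnitCircle.
Variable R : realType.
Local Notation C := R[i].
(* R[i] as a normed module over itself, the setting of derive.v *)
Local Notation CN := (Num.NumField.sort (R[i] : numFieldType)).

Lemma contTP (f : C -> C) : contT f <->
  forall z, onT z -> (f : CN -> CN) @ within (@onT R) (nbhs (z : CN)) --> (f z : CN).
Proof.
split=> [cf z Tz | cf z Tz eps eps_gt0].
- apply/cvgrPdist_lt => eps eps_gt0; have [d d_gt0 Hd] := cf z Tz eps eps_gt0.
  exists d => //= w zw Tw.
  by rewrite distrC; apply: Hd => //; rewrite distrC.
- have [d d_gt0 Hd] := (cvgrPdist_lt _ _).1 (cf z Tz) eps eps_gt0.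
  by exists d => // w Tw zw; rewrite distrC; apply: Hd Tw => /=; rewrite distrC.
Qed.

Lemma contT_cst (c : C) : contT (fun _ => c).
Proof. by move=> z _ eps eps_gt0; exists 1 => // w _ _; rewrite subrr normr0. Qed.

Lemma contT_add (f g : C -> C) : contT f -> contT g -> contT (fun z => f z + g z).
Proof. by move=> /contTP cf /contTP cg; apply/contTP => z Tz; apply: cvgD; auto. Qed.

Lemma contT_mul (f g : C -> C) : contT f -> contT g -> contT (fun z => f z * g z).
Proof. by move=> /contTP cf /contTP cg; apply/contTP => z Tz; apply: cvgM; auto. Qed.

Lemma contT_prod (I : Type) (r : seq I) (F : I -> C -> C) :
  (forall i, contT (F i)) -> contT (fun z => \prod_(i <- r) F i z).
Proof.
move=> cF; elim: r => [|i r IHr].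
  have -> : (fun z => \prod_(i <- [::]) F i z) = fun=> 1.
    by apply: funext => z; rewrite big_nil.
  exact: contT_cst.
have -> : (fun z => \prod_(j <- i :: r) F j z) = fun z => F i z * \prod_(j <- r) F j z.
  by apply: funext => z; rewrite big_cons.
exact: contT_mul.
Qed.

Lemma contT_comp (f g : C -> C) : contT f ->
  (forall z, onT z -> onT (g z)) ->
  (forall z, onT z -> {for z, continuous (g : CN -> CN)}) ->
  contT (fun z => f (g z)).
Proof.
move=> cf gT cg z Tz eps eps_gt0.
have [d d_gt0 Hd] := cf (g z) (gT z Tz) eps eps_gt0.
have [d' d'_gt0 Hd'] := (cvgrPdist_lt _ _).1 (cg z Tz) d d_gt0.
exists d' => // w Tw zw; apply: Hd (gT w Tw) _.
by rewrite distrC; apply: Hd' => /=; rewrite distrC.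
Qed.

Lemma is_cderivP (f : C -> C) z d :
  is_cderiv f z d <-> (fun h : CN => h^-1 * (f (h + z) - f z)) @ 0^' --> (d : CN).
Proof.
split=> [df | /cvgrPdist_lt df eps eps_gt0].
- apply/cvgrPdist_lt => eps eps_gt0; have [delta delta_gt0 Hd] := df eps eps_gt0.
  exists delta => //= h; rewrite /ball_ /= sub0r normrN => hd h0.
  by rewrite distrC mulrC [h + z]addrC; apply: Hd; rewrite normr_gt0 h0.
- have [delta delta_gt0 Hd] := df eps eps_gt0.
  exists delta => // h /andP[h0 hd]; rewrite mulrC [z + h]addrC distrC.
  by apply: Hd; rewrite -?normr_gt0 // /ball_ /= sub0r normrN.
Qed.

Lemma is_cderiv_unique (f : C -> C) z d1 d2 :
  is_cderiv f z d1 -> is_cderiv f z d2 -> d1 = d2.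
Proof. by move=> /is_cderivP df1 /is_cderivP df2; exact: cvg_unique df1 df2. Qed.

Lemma cderivE (f : C -> C) z : differentiable (f : CN -> CN) z ->
  cderiv f z = 'D_1 (f : CN -> CN) z.
Proof.
move=> /(derivable1_diffP (f : CN -> CN)) df.
have Df : is_cderiv f z ('D_1 (f : CN -> CN) z).
  apply/is_cderivP; suff -> : (fun h : CN => h^-1 * (f (h + z) - f z)) =
      fun h => h^-1 *: (((f : CN -> CN) \o shift z) (h *: 1) - f z) by [].
  by apply: funext => h; rewrite /= [h *: _]mulr1.
by apply: (is_cderiv_unique _ Df); apply: epsilon_spec; exists ('D_1 (f : CN -> CN) z).
Qed.

Lemma cderiv_id (z : C) : cderiv id z = 1.
Proof. by rewrite cderivE // derive_id. Qed.

Lemma cderiv_comp (f g : C -> C) z :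
  differentiable (f : CN -> CN) z -> differentiable (g : CN -> CN) (f z : CN) ->
  cderiv (g \o f) z = cderiv g (f z) * cderiv f z.
Proof.
move=> df dg.
have dgf : differentiable ((g \o f) : CN -> CN) z := differentiable_comp df dg.
set Df := 'D_1 (f : CN -> CN) z; set dg1 := 'd (g : CN -> CN) (f z : CN).
have dgZ : dg1 (Df *: (1 : CN)) = Df *: dg1 1 by rewrite linearZ.
rewrite (cderivE dgf) (cderivE dg) (cderivE df) (deriveE (1 : CN) dgf).
apply: (etrans (congr1 (fun L => L (1 : CN)) (diff_comp df dg))).
apply: (etrans (congr1 dg1 (esym (deriveE (1 : CN) df)))).
apply: (etrans (congr1 dg1 (esym (mulr1 Df)))); apply: (etrans dgZ).
by rewrite (deriveE (1 : CN) dg) mulrC.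
Qed.

Lemma differentiable_prod (I : eqType) (r : seq I) (F : I -> C -> C) (z : CN) :
  (forall i, i \in r -> differentiable (F i : CN -> CN) z) ->
  differentiable ((fun y : C => \prod_(i <- r) F i y) : CN -> CN) (z : CN).
Proof.
elim: r => [|i r IHr] dF.
  have -> : (fun y => \prod_(i <- [::]) F i y) = cst 1.
    by apply: funext => y; rewrite big_nil.
  exact: differentiable_cst.
have -> : (fun y => \prod_(j <- i :: r) F j y) =
    (F i : CN -> CN) * ((fun y => \prod_(j <- r) F j y) : CN -> CN).
  by apply: funext => y; rewrite big_cons.
apply: differentiableM; first by apply: dF; rewrite mem_head.
by apply: IHr => j jr; apply: dF; rewrite in_cons jr orbT.
Qed.

Lemma differentiable_mobius (a : C) (z : CN) : 1 - a^* * z != 0 ->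
  differentiable ((fun y : C => (y - a) / (1 - a^* * y)) : CN -> CN) z.
Proof.
move=> den_neq0.
have did : differentiable (id : CN -> CN) z by [].
have dnum : differentiable ((id \- cst a) : CN -> CN) z :=
  differentiableB did (differentiable_cst _ _).
have dden : differentiable ((cst 1 \- cst a^* * id) : CN -> CN) z :=
  differentiableB (differentiable_cst _ _)
    (differentiableM (differentiable_cst _ _) did).
exact: (differentiableM dnum (differentiableV dden den_neq0)).
Qed.

Definition is_fibreT (Q : C -> C) (w : C) (s : seq C) :=
  uniq s /\ forall z, z \in s <-> onT z /\ Q z = w.

Lemma preimT_fibre (Q : C -> C) w :
  (exists s, is_fibreT Q w s) -> is_fibreT Q w (preimT Q w).
Proof. exact: epsilon_spec. Qed.

Lemma fibreT_of_roots (Q : C -> C) w (p : {poly C}) : p != 0 ->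
  (forall z, onT z -> Q z = w -> root p z) -> exists s, is_fibreT Q w s.
Proof.
move=> p_neq0 rootQ; have [r p_split] := closed_field_poly_normal p.
exists (undup [seq z <- r | `[< onT z /\ Q z = w >]]); split; first exact: undup_uniq.
move=> z; rewrite mem_undup mem_filter; split; first by case/andP => /asboolP.
move=> [Tz Qz]; rewrite asboolT //=.
by have := rootQ z Tz Qz; rewrite p_split rootZ ?lead_coef_eq0 // root_prod_XsubC.
Qed.

Lemma ipX_sum (Q : C -> C) (I J : Type) (s : seq I) (t : seq J) g h w :
  ipX Q (fun z => \sum_(i <- s) g i z) (fun z => \sum_(j <- t) h j z) w =
  \sum_(i <- s) \sum_(j <- t) ipX Q (g i) (h j) w.
Proof.
rewrite /ipX.
have sumE c (X : I -> C) (Y : J -> C) : c * (\sum_(i <- s) X i)^* * \sum_(j <- t) Y j =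
    \sum_(i <- s) \sum_(j <- t) c * (X i)^* * Y j.
  rewrite rmorph_sum [c * _]mulr_sumr mulr_suml; apply: eq_bigr => i _.
  by rewrite mulr_sumr.
under eq_bigr do rewrite sumE.
by rewrite exchange_big; apply: eq_bigr => i _; rewrite exchange_big.
Qed.

Section SelfMapOfT.
Variable Q : C -> C.
Hypothesis Q_onT : forall z, onT z -> onT (Q z).
Hypothesis Q_diff : forall z, onT z -> differentiable (Q : CN -> CN) (z : CN).
Hypothesis Q_fibre : forall w, onT w -> exists s, is_fibreT Q w s.

Lemma iter_onT n z : onT z -> onT (iterc n Q z).
Proof. by move=> Tz; elim: n => // n IHn; apply: Q_onT. Qed.

Lemma iter_differentiable n z : onT z ->
  differentiable (iterc n Q : CN -> CN) (z : CN).
Proof.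
move=> Tz; elim: n => [|n IHn].
  have did : differentiable (id : CN -> CN) (z : CN) by [].
  exact: did.
exact: (differentiable_comp IHn (Q_diff (iter_onT n Tz))).
Qed.

Lemma iter_fibre n w : onT w -> is_fibreT (iterc n Q) w (preimT (iterc n Q) w).
Proof.
elim: n w => [|n IHn] w Tw; apply: preimT_fibre.
  exists [:: w]; split=> // z; rewrite inE.
  by split=> [/eqP ->|[_ Qz]]; last exact/eqP.
have [_ fibreQ] := preimT_fibre (Q_fibre Tw).
exists (undup (flatten [seq preimT (iterc n Q) y | y <- preimT Q w])).
split=> [|z]; first exact: undup_uniq.
rewrite mem_undup; split.
  move=> /flatten_mapP[y /fibreQ[Ty <-] /((IHn y Ty).2 z)[Tz <-]].
  by split.
move=> [Tz Qz]; apply/flatten_mapP; exists (iterc n Q z).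
  by apply/fibreQ; split=> //; apply: iter_onT.
exact/((IHn _ (iter_onT n Tz)).2 z).
Qed.

Lemma preimT_iter0 w : onT w -> perm_eq (preimT (iterc 0 Q) w) [:: w].
Proof.
move=> Tw; have [uniq_fibre fibre0] := iter_fibre 0 Tw.
apply: uniq_perm => // z; rewrite inE.
by apply/idP/eqP => [/fibre0[]|->]; last exact/fibre0.
Qed.

Lemma big_preimT_iterS n w (G : C -> C) : onT w ->
  \sum_(z <- preimT (iterc n.+1 Q) w) G z =
  \sum_(y <- preimT Q w) \sum_(z <- preimT (iterc n Q) y) G z.
Proof.
move=> Tw; have [uniqS fibreS] := iter_fibre n.+1 Tw.
have [uniqQ fibreQ] := preimT_fibre (Q_fibre Tw).
rewrite [RHS](eq_big_seq (fun y =>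
    \sum_(z <- preimT (iterc n.+1 Q) w | iterc n Q z == y) G z)); last first.
  move=> y /fibreQ[Ty Qy]; rewrite -[RHS]big_filter; apply: perm_big.
  have [uniqY fibreY] := iter_fibre n Ty.
  apply: uniq_perm => //; first exact: filter_uniq.
  move=> z; rewrite mem_filter; apply/idP/andP => [/fibreY[Tz Qz]|[/eqP Qz /fibreS[Tz _]]].
    by split; [apply/eqP | apply/fibreS; split=> //; rewrite -Qy -Qz].
  exact/fibreY.
under eq_bigr do rewrite big_mkcond.
rewrite exchange_big /=; apply: eq_big_seq => z /fibreS[Tz Qz].
have Qz_fibre : iterc n Q z \in preimT Q w.
  by apply/fibreQ; split; first exact: iter_onT.
rewrite (bigD1_seq (iterc n Q z)) //= eqxx big1 ?addr0 // => y.
by rewrite eq_sym => /negbTE ->.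
Qed.

Lemma cderiv_iterS n z : onT z ->
  cderiv (iterc n.+1 Q) z = cderiv Q (iterc n Q z) * cderiv (iterc n Q) z.
Proof.
move=> Tz.
exact: (cderiv_comp (iter_differentiable n Tz) (Q_diff (iter_onT n Tz))).
Qed.

Definition tensor_ip n (E F : nat -> C -> C) : C -> C :=
  foldl (fun c i => ipX Q (E i) (fun z => c z * F i z)) (fun=> 1) (iota 0 n).

Lemma tensor_ipS n (E F : nat -> C -> C) :
  tensor_ip n.+1 E F = ipX Q (E n) (fun z => tensor_ip n E F z * F n z).
Proof. by rewrite /tensor_ip -addn1 iotaD foldl_cat. Qed.

Lemma tensor_ipE n (E F : nat -> C -> C) w : onT w ->
  tensor_ip n E F w = ipX (iterc n Q)
    (psi_formula Q (fun i : 'I_n => E i)) (psi_formula Q (fun i : 'I_n => F i)) w.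
Proof.
elim: n w => [|n IHn] w Tw.
  rewrite /ipX (perm_big _ (preimT_iter0 Tw)) big_seq1.
  by rewrite cderiv_id normr1 invr1 /psi_formula !big_ord0 rmorph1 !mul1r.
rewrite tensor_ipS /ipX (big_preimT_iterS _ _ Tw); apply: eq_big_seq => y.
have [_ fibreQ] := preimT_fibre (Q_fibre Tw); move=> /fibreQ[Ty Qy].
rewrite IHn // /ipX mulr_suml mulr_sumr; apply: eq_big_seq => z.
have [_ fibreY] := iter_fibre n Ty; move=> /fibreY[Tz Qz].
rewrite (cderiv_iterS n Tz) Qz /psi_formula !big_ord_recr /= Qz.
rewrite normrM invfM !rmorphM /=.
ring.
Qed.

(* Indexing the factors by nat allows induction on their number. *)
Definition nat_family m (e : elem_tensor R m) : nat -> C -> C :=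
  fun i => if insub i is Some j then e j else fun=> 0.

Lemma nat_familyK m (e : elem_tensor R m) : (fun i : 'I_m => nat_family e i) = e.
Proof. by apply: funext => i; rewrite /nat_family valK. Qed.

Lemma ip_elem_tensor_ip m (e f : elem_tensor R m) :
  ip_elem Q e f = tensor_ip m (nat_family e) (nat_family f).
Proof.
rewrite /ip_elem /tensor_ip -val_enum_ord.
elim: (enum 'I_m) (fun=> 1) => //= i s IHs c.
by rewrite IHs /nat_family valK.
Qed.

Lemma ip_elemE m (e f : elem_tensor R m) w : onT w ->
  ip_elem Q e f w = ipX (iterc m Q) (psi_formula Q e) (psi_formula Q f) w.
Proof. by move=> Tw; rewrite ip_elem_tensor_ip tensor_ipE // !nat_familyK. Qed.

Definition psi_sum {m} (s : formal_sum R m) : C -> C :=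
  fun z => \sum_(e <- s) psi_formula Q e z.

Lemma ipX_psi_sum m (s t : formal_sum R m) w : onT w ->
  ipX (iterc m Q) (psi_sum s) (psi_sum t) w = ip_tensor Q s t w.
Proof.
move=> Tw; rewrite ipX_sum; apply: eq_bigr => e _; apply: eq_bigr => f _.
by rewrite ip_elemE.
Qed.

Lemma contT_psi_formula m (e : elem_tensor R m) :
  (forall i, contT (e i)) -> contT (psi_formula Q e).
Proof.
move=> ce; apply: contT_prod => i; apply: contT_comp (ce i) _ _.
  by move=> z Tz; apply: iter_onT.
by move=> z Tz; apply: differentiable_continuous; apply: iter_differentiable.
Qed.

Lemma contT_psi_sum m (s : formal_sum R m) : valid_sum s -> contT (psi_sum s).
Proof.
elim: s => [_|e s IHs [ce vs]].
  have -> : psi_sum (m := m) [::] = fun=> 0.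
    by apply: funext => z; rewrite /psi_sum big_nil.
  exact: contT_cst.
have -> : psi_sum (e :: s) = fun z => psi_formula Q e z + psi_sum s z.
  by apply: funext => z; rewrite /psi_sum big_cons.
exact: contT_add (contT_psi_formula ce) (IHs vs).
Qed.

Lemma psi_formula_lact m a (e : elem_tensor R m.+1) z :
  psi_formula Q (lact_elem a e) z = a z * psi_formula Q e z.
Proof. by rewrite /psi_formula !big_ord_recl mulrA. Qed.

Lemma psi_formula_ract m b (e : elem_tensor R m.+1) z :
  psi_formula Q (ract_elem Q b e) z = psi_formula Q e z * b (iterc m.+1 Q z).
Proof.
rewrite /psi_formula !big_ord_recr /= /ract_elem /= eqxx mulrA; congr (_ * _ * _).
by apply: eq_bigr => i _; rewrite ltn_eqF.
Qed.

Definition lead_tensor {m} (eta : C -> C) : elem_tensor R m.+1 :=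
  fun i => if val i == 0%N then eta else fun=> 1.

Lemma psi_formula_lead m eta z : psi_formula Q (@lead_tensor m eta) z = eta z.
Proof. by rewrite /psi_formula big_ord_recl big1 ?mulr1. Qed.

End SelfMapOfT.

Section BlaschkeProduct.
Variables (lam : C) (zs : seq C).
Hypothesis zs_disc : forall a, a \in zs -> `|a| < 1.
Local Notation B := (blaschke lam zs).

Lemma mobius_den_neq0 (a z : C) : `|a| < 1 -> `|z| <= 1 -> 1 - a^* * z != 0.
Proof.
move=> a_lt1 z_le1; rewrite subr_eq0; apply: contraTneq a_lt1 => az_eq1.
have az : `|a| * `|z| = 1 by rewrite -norm_conjC -normrM -az_eq1 normr1.
apply/negP => a_lt1; have := ler_piMr (normr_ge0 a) z_le1.
by rewrite az => /le_lt_trans/(_ a_lt1); rewrite ltxx.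
Qed.

Lemma normr_mobius_den (a z : C) : onT z -> `|1 - a^* * z| = `|z - a|.
Proof.
move=> Tz; have zz : z * z^* = 1 by rewrite -normCK Tz expr1n.
have -> : 1 - a^* * z = z * (z - a)^* by rewrite rmorphB mulrBr zz mulrC.
by rewrite normrM Tz mul1r norm_conjC.
Qed.

Lemma blaschke_onT : `|lam| = 1 -> forall z, onT z -> onT (B z).
Proof.
move=> lam_T z Tz; rewrite /onT /blaschke normrM lam_T mul1r normr_prod.
rewrite big_seq big1 // => a /zs_disc a_lt1.
rewrite normrM normfV normr_mobius_den // mulfV // normr_eq0 subr_eq0.
by apply: contraTneq a_lt1 => <-; rewrite Tz ltxx.
Qed.

Lemma blaschke_differentiable (z : C) : onT z ->
  differentiable (B : CN -> CN) (z : CN).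
Proof.
move=> Tz.
have dB : differentiable ((cst lam * (fun y : C =>
    \prod_(a <- zs) ((y - a) / (1 - a^* * y)))) : CN -> CN) (z : CN).
  apply: differentiableM; first exact: differentiable_cst.
  apply: differentiable_prod => a /zs_disc a_lt1.
  by apply/differentiable_mobius/mobius_den_neq0; rewrite ?Tz.
exact: dB.
Qed.

Lemma blaschke_fibre : (0 < size zs)%N ->
  forall w, onT w -> exists s, is_fibreT B w s.
Proof.
move=> zs_n0 w Tw.
pose p : {poly C} := lam *: \prod_(a <- zs) ('X - a%:P)
                     - w *: \prod_(a <- zs) (1 - a^* *: 'X).
have pE z : p.[z] = lam * \prod_(a <- zs) (z - a) - w * \prod_(a <- zs) (1 - a^* * z).
  rewrite /p hornerD hornerN !hornerZ !horner_prod; congr (_ * _ - _ * _).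
    by apply: eq_bigr => a _; rewrite hornerXsubC.
  by apply: eq_bigr => a _; rewrite hornerD hornerN hornerZ hornerX hornerC.
have den_neq0 z : `|z| <= 1 -> \prod_(a <- zs) (1 - a^* * z) != 0.
  move=> z_le1; rewrite prodf_seq_neq0; apply/allP => a /zs_disc a_lt1.
  exact: mobius_den_neq0.
apply: (@fibreT_of_roots _ _ p) => [|z Tz Bz].
  case: zs zs_n0 zs_disc pE den_neq0 => // a0 zs' _ disc0 pE den_neq0.
  apply: contraTneq (den_neq0 a0 (ltW (disc0 a0 (mem_head _ _)))) => p_eq0.
  rewrite negbK; have := pE a0.
  rewrite p_eq0 horner0 big_cons subrr mul0r mulr0 sub0r => /esym/eqP.
  rewrite oppr_eq0 mulf_eq0 => /orP[/eqP w0|//].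
  by move: Tw; rewrite /onT w0 normr0 => /eqP; rewrite eq_sym oner_eq0.
rewrite /root pE -Bz /blaschke big_split /= prodfV -mulrA divfK ?subrr //.
by apply: den_neq0; rewrite Tz.
Qed.

End BlaschkeProduct.

End UnitCircle.

Theorem proposition4p5 (R : realType) (lam : R[i]) (zs : seq R[i]) (m : nat) :
  `|lam| = 1 -> (forall a, a \in zs -> `|a| < 1) -> (0 < size zs)%N ->
  (1 <= m)%N ->
  let Rb := blaschke lam zs in
  let Rm := iterc m Rb in
  exists Psi : formal_sum R m -> R[i] -> R[i],
    (forall e : elem_tensor R m, (forall i, contT (e i)) ->
       eqT (Psi [:: e]) (psi_formula Rb e)) /\
    (forall s t, valid_sum s -> valid_sum t ->
       eqT (Psi (s ++ t)) (fun z => Psi s z + Psi t z)) /\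
    (forall s, valid_sum s -> contT (Psi s)) /\
    (forall a s, contT a -> valid_sum s ->
       eqT (Psi (map (lact_elem a) s)) (fun z => a z * Psi s z)) /\
    (forall b s, contT b -> valid_sum s ->
       eqT (Psi (map (ract_elem Rb b) s)) (fun z => Psi s z * b (Rm z))) /\
    (forall s t, valid_sum s -> valid_sum t ->
       eqT (ipX Rm (Psi s) (Psi t)) (ip_tensor Rb s t)) /\
    (forall eta, contT eta -> forall eps : R[i], 0 < eps ->
       exists2 s, valid_sum s &
         forall w, onT w ->
           `|ipX Rm (fun z => eta z - Psi s z) (fun z => eta z - Psi s z) w| < eps).
Proof.
move=> lam_T zs_disc zs_n0; case: m => // m _ Rb Rm.
have Rb_onT := blaschke_onT zs_disc lam_T.
have Rb_diff := blaschke_differentiable lam zs_disc.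
have Rb_fibre := blaschke_fibre lam zs_disc zs_n0.
exists (psi_sum Rb); split; [|split; [|split; [|split; [|split; [|split]]]]].
- by move=> e _ z _; rewrite /psi_sum big_seq1.
- by move=> s t _ _ z _; rewrite /psi_sum big_cat.
- by move=> s; apply: (contT_psi_sum Rb_onT Rb_diff).
- move=> a s _ _ z _; rewrite /psi_sum big_map mulr_sumr.
  by apply: eq_bigr => e _; rewrite psi_formula_lact.
- move=> b s _ _ z _; rewrite /psi_sum big_map mulr_suml.
  by apply: eq_bigr => e _; rewrite psi_formula_ract.
- by move=> s t _ _ w; apply: (ipX_psi_sum Rb_onT Rb_diff Rb_fibre).
move=> eta eta_cont eps eps_gt0; exists [:: lead_tensor eta].
  by split=> // i; rewrite /lead_tensor; case: ifP => _; last exact: contT_cst.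
move=> w _; rewrite /ipX big1 ?normr0 // => z _.
by rewrite /psi_sum big_seq1 psi_formula_lead subrr rmorph0 !mulr0.
Qed.
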